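(* Let $\langle A,\to\rangle$ be a conditional algebra. Then the Stone map $\varphi\colon A\to\mathcal{P}(\mathrm{Ul}(A))$, $\varphi(a)=\{u\in\mathrm{Ul}(A): a\in u\}$, is an embedding of $\langle A,\to\rangle$ into $\mathrm{Em}(A)=\langle \mathcal{P}(\mathrm{Ul}(A)),\to_{T_A}\rangle$. That is, $\varphi$ is an injective Boolean homomorphism and $\varphi(a\to b)=\varphi(a)\to_{T_A}\varphi(b)$ for all $a,b\in A$.
   Context: A conditional algebra is a pair $\langle A,\to\rangle$ where $A$ is a Boolean algebra and $\to$ is a binary operation on $A$ such that for all $a,b,c$: $a\to 1=1$; $(a\to b)\wedge(a\to c)=a\to(b\wedge c)$; $(a\vee b)\to c\le (a\to c)\wedge(b\to c)$. Filters of $A$ include the improper filter $A$; $\mathrm{Ul}(A)$ is the set of ultrafilters. For a filter $F$, $\varphi(F)=\{u\in\mathrm{Ul}(A):F\subseteq u\}$ (so $\varphi(A)=\emptyset$). For $X,Y\subseteq A$, $D^{\to}_X(Y)=\{b\in A:\exists a\in Y,\ a\to b\in X\}$. The relation $T_A\subseteq \mathrm{Ul}(A)\times\mathcal{P}(\mathrm{Ul}(A))\times\mathrm{Ul}(A)$ is defined by: $T_A(u,Z,v)$ iff there is a filter $F$ of $A$ with $Z=\varphi(F)$ and $D^{\to}_u(F)\subseteq v$. Write $T_A(u,Z)=\{v: T_A(u,Z,v)\}$. For $U,V\subseteq \mathrm{Ul}(A)$, $U\to_{T_A}V=\{u\in\mathrm{Ul}(A): \text{for all } Z\subseteq U,\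 T_A(u,Z)\subseteq V\}$. *)

(* Boolean algebras are MathComp's ctbDistrLatticeType
   (complemented distributive lattices with top and bottom); subsets are
   MathComp-classical's [set T] (= T -> Prop). *)
From HB Require Import structures.
From mathcomp Require Import all_boot all_order.
From mathcomp Require Import classical_sets.
Set Implicit Arguments. Unset Strict Implicit. Unset Printing Implicit Defensive.
Import Order.TTheory.
Local Open Scope classical_set_scope.

Section CondAlg.
Variables (d : Order.disp_t) (A : ctbDistrLatticeType d).

Definition is_conditional (arr : A -> A -> A) : Prop :=
  [/\ forall a : A, arr a Order.top = Order.top,
      forall a b c : A, Order.meet (arr a b) (arr a c) = arr a (Order.meet b c)
    & forall a b c : A,
        (arr (Order.join a b) c <= Order.meet (arr a c) (arr b c))%O].

Definition is_filter (F : set A) : Prop :=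
  [/\ F Order.top,
      forall a b : A, F a -> (a <= b)%O -> F b
    & forall a b : A, F a -> F b -> F (Order.meet a b)].

Definition proper_filter (F : set A) : Prop := is_filter F /\ ~ F Order.bottom.

Definition ultrafilter (u : set A) : Prop :=
  proper_filter u /\ forall G : set A, proper_filter G -> u `<=` G -> G = u.

Definition Ul : set (set A) := [set u | ultrafilter u].

Definition stone (a : A) : set (set A) := [set u | ultrafilter u /\ u a].

Definition phiF (F : set A) : set (set A) := [set u | ultrafilter u /\ F `<=` u].

Definition Dto (arr : A -> A -> A) (X Y : set A) : set A :=
  [set b | exists2 a, Y a & X (arr a b)].

Definition TA (arr : A -> A -> A) (u : set A) (Z : set (set A)) (v : set A) : Prop :=
  [/\ ultrafilter u, ultrafilter v &
      exists F : set A, [/\ is_filter F, Z = phiF F & Dto arr u F `<=` v]].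

Definition TAset (arr : A -> A -> A) (u : set A) (Z : set (set A)) : set (set A) :=
  [set v | TA arr u Z v].

Definition arrT (arr : A -> A -> A) (U V : set (set A)) : set (set A) :=
  [set u | ultrafilter u /\ forall Z, Z `<=` U -> TAset arr u Z `<=` V].

End CondAlg.

(** Ultrafilters are the points; Zorn's lemma provides enough of them to
    separate an element from any filter missing it, so [phiF F `<=` stone a]
    forces [F a].  This gives injectivity and the inclusion
    [stone (arr a b) `<=` arrT arr (stone a) (stone b)].  Conversely, if
    [arr a b] is not in [u], the filter [[set c | u (arr a c)]] misses [b], and
    an ultrafilter [v] extending it and missing [b] is a [T_A]-successor of [u]
    along [stone a = phiF (principal a)] outside [stone b]. *)
From HB Require Import structures.
From mathcomp Require Import all_boot all_order.
From mathcomp Require Import boolp classical_sets.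
Import Order.Theory.
Local Open Scope classical_set_scope.

Section StoneRepresentation.
Set Implicit Arguments.
Local Open Scope order_scope.
Context {d : Order.disp_t} {A : ctbDistrLatticeType d}.
Implicit Types (a b c x : A) (F G H u v : set A).

Lemma proper_filter_bigcup (J : set (set A)) :
  J !=set0 -> (forall H, J H -> proper_filter H) -> total_on J subset ->
  proper_filter (\bigcup_(H in J) H).
Proof.
move=> [H0 JH0] PJ tot.
have common a b : (\bigcup_(H in J) H) a -> (\bigcup_(H in J) H) b ->
    exists2 H, J H & H a /\ H b.
  move=> [H1 JH1 H1a] [H2 JH2 H2b].
  have [H12|H21] := tot _ _ JH1 JH2.
  - by exists H2 => //; split => //; apply: H12.
  - by exists H1 => //; split => //; apply: H21.
split; first split.
- by exists H0 => //; case: (PJ _ JH0) => -[].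
- move=> a b [H JH Ha] ab; exists H => //.
  by case: (PJ _ JH) => -[_ Hup _] _; apply: Hup ab.
- move=> a b Ua Ub; have [H JH [Ha Hb]] := common a b Ua Ub.
  by exists H => //; case: (PJ _ JH) => -[_ _ HI] _; apply: HI.
- by move=> [H JH Hbot]; case: (PJ _ JH) => _; apply.
Qed.

Lemma proper_filterU_chain F (I : set (set A)) :
  proper_filter F -> (forall G, I G -> proper_filter (F `|` G)%classic) ->
  total_on I subset -> proper_filter (F `|` \bigcup_(G in I) G)%classic.
Proof.
move=> PF PI tot; pose J := (F |` [set (F `|` G)%classic | G in I])%classic.
have -> : (F `|` \bigcup_(G in I) G)%classic = \bigcup_(H in J) H.
  apply/seteqP; split=> x.
  - case=> [Fx|[G IG Gx]]; first by exists F; [left|].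
    by exists (F `|` G)%classic; [right; exists G|right].
  - by case=> H [->|[G IG <-]]; [left|case=> [|Gx]; [left|right; exists G]].
apply: proper_filter_bigcup; first by exists F; left.
  by move=> H [->|[G IG <-]]; [|apply: PI].
move=> H1 H2 [->|[G1 IG1 <-]] [->|[G2 IG2 <-]];
  try by [left | left; apply: subsetUl | right; apply: subsetUl].
by have [G12|G21] := tot _ _ IG1 IG2; [left|right]; apply: setUS.
Qed.

(* Zorn is applied to the sets [G] with [F `|` G] a proper filter, so that the
   empty chain (whose union is [set0]) is harmless. *)
Lemma ultrafilter_extension F :
  proper_filter F -> exists2 u, ultrafilter u & F `<=` u.
Proof.
move=> PF; pose P G := proper_filter (F `|` G)%classic.
have [G [PG maxG]] : exists G, P G /\ forall H, G `<` H -> ~ P H.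
  by apply: Zorn_bigcup => I IP; apply: proper_filterU_chain.
exists (F `|` G)%classic; last exact: subsetUl.
split=> // H PH FGH.
have GH : G `<=` H by apply: subset_trans FGH; apply: subsetUr.
have PH' : P H.
  by rewrite /P setUidr //; apply: subset_trans FGH; apply: subsetUl.
have HG : H `<=` G by apply: contrapT => nHG; apply: (maxG H).
by apply/seteqP; split=> // x /HG; right.
Qed.

Definition filter_adjoin F x : set A := [set c | exists2 f, F f & f `&` x <= c].

Lemma filter_adjoin_sub F x : F `<=` filter_adjoin F x.
Proof. by move=> c Fc; exists c => //; apply: leIl. Qed.

Lemma filter_adjoin_mem F x : is_filter F -> filter_adjoin F x x.
Proof. by case=> Ft _ _; exists \top => //; apply: leIr. Qed.

Lemma filter_adjoin_proper F x :
  is_filter F -> ~ F (~` x) -> proper_filter (filter_adjoin F x).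
Proof.
case=> Ft Fup FI nFx; split; first split.
- by exists \top => //; apply: lex1.
- by move=> a b [f Ff fa] ab; exists f => //; apply: le_trans ab.
- move=> a b [f Ff fa] [g Fg gb]; exists (f `&` g); first exact: FI.
  rewrite lexI; apply/andP; split.
  + by apply: le_trans fa; apply: leI2 => //; apply: leIl.
  + by apply: le_trans gb; apply: leI2 => //; apply: leIr.
- by case=> f Ff; rewrite lex0 disj_leC => /(Fup _ _ Ff).
Qed.

Lemma ultrafilter_compl u a : ultrafilter u -> u (~` a) <-> ~ u a.
Proof.
move=> [[uF nubot] umax]; have [_ _ uI] := uF; split.
  by move=> uca ua; apply: nubot; rewrite -(meetxC a); apply: uI.
move=> nua; apply: contrapT => nuca; apply: nua.
have -> : u = filter_adjoin u a.
  apply/esym/umax; last exact: filter_adjoin_sub.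
  exact: filter_adjoin_proper.
exact: filter_adjoin_mem.
Qed.

Lemma ultrafilter_join u a b : ultrafilter u -> u (a `|` b) <-> u a \/ u b.
Proof.
move=> uu; have [[_ uup uI] _] := uu.1; split.
  move=> uab; apply: contrapT => /not_orP[/(ultrafilter_compl _ uu) uca
    /(ultrafilter_compl _ uu) ucb].
  by have := uI _ _ uca ucb; rewrite -complU; apply/(ultrafilter_compl _ uu).
by case=> [ua|ub]; [apply: uup ua _; apply: leUl|apply: uup ub _; apply: leUr].
Qed.

Lemma ultrafilter_separation F a :
  is_filter F -> ~ F a -> exists2 u, ultrafilter u & F `<=` u /\ ~ u a.
Proof.
move=> HF nFa.
have /ultrafilter_extension[u uu sub] : proper_filter (filter_adjoin F (~` a)).
  by apply: filter_adjoin_proper; rewrite ?complK.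
exists u => //; split; first by move=> c Fc; apply/sub/filter_adjoin_sub.
by apply/(ultrafilter_compl _ uu)/sub/filter_adjoin_mem.
Qed.

Lemma phiF_subset_stone F a : is_filter F -> phiF F `<=` stone a <-> F a.
Proof.
move=> HF; split; last by move=> Fa u [uu Fu]; split => //; apply: Fu.
move=> sub; apply: contrapT => /(ultrafilter_separation _ HF)[u uu [Fu nua]].
by apply: nua; have [] := sub u (conj uu Fu).
Qed.

Definition principal a : set A := [set c | a <= c].

Lemma principal_filter a : is_filter (principal a).
Proof.
split; first exact: lex1.
- by move=> x y ax xy; apply: le_trans xy.
- by move=> x y ax ay; rewrite /principal /= lexI ax ay.
Qed.

Lemma phiF_principal a : phiF (principal a) = stone a.
Proof.
apply/seteqP; split=> u [uu ua]; split => //; first exact/ua/lexx.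
by move=> c ac; have [_ uup _] := uu.1.1; apply: uup ua ac.
Qed.

Lemma stone_subset a b : stone a `<=` stone b <-> a <= b.
Proof. by rewrite -phiF_principal phiF_subset_stone //; apply: principal_filter. Qed.

Lemma stone_inj : injective (@stone d A).
Proof.
by move=> a b eqab; apply/le_anti/andP; split; apply/stone_subset; rewrite eqab.
Qed.

Lemma stoneT : stone \top = @Ul d A.
Proof.
by apply/seteqP; split=> u; [case|move=> uu; split=> //; case: uu.1.1].
Qed.

Lemma stone0 : stone \bot = set0 :> set (set A).
Proof. by apply/seteqP; split=> u // [uu]; apply: uu.1.2. Qed.

Lemma stoneI a b : stone (a `&` b) = (stone a `&` stone b)%classic.
Proof.
apply/seteqP; split=> u.
- case=> uu uab; have [_ uup _] := uu.1.1.
  by split; split=> //; apply: uup uab _; [apply: leIl|apply: leIr].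
- by case=> -[uu ua] [_ ub]; split=> //; have [_ _ uI] := uu.1.1; apply: uI.
Qed.

Lemma stoneU a b : stone (a `|` b) = (stone a `|` stone b)%classic.
Proof.
apply/seteqP; split=> u.
- by case=> uu /(ultrafilter_join _ _ uu)[ua|ub]; [left|right].
- by case=> -[uu uab]; split=> //; apply/(ultrafilter_join _ _ uu); [left|right].
Qed.

Lemma stoneC a : stone (~` a) = (@Ul d A `\` stone a)%classic.
Proof.
apply/seteqP; split=> u.
- by case=> uu /(ultrafilter_compl _ uu) nua; split=> // -[].
- by case=> uu nua; split=> //; apply/(ultrafilter_compl _ uu) => ua; apply: nua.
Qed.

Section Conditional.
Variables (arr : A -> A -> A) (arr_cond : is_conditional arr).

Lemma arr_homo_r a : {homo arr a : x y / x <= y}.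
Proof.
case: arr_cond => _ arrI _ x y xy.
by rewrite -(meet_idPl xy) -arrI; apply: leIr.
Qed.

Lemma arr_nhomo_l c : {homo arr^~ c : x y / x <= y >-> y <= x}.
Proof.
case: arr_cond => _ _ arrU x y xy.
by rewrite -{1}(join_idPr xy); apply: le_trans (arrU x y c) _; apply: leIl.
Qed.

Lemma arr_filter u a : is_filter u -> is_filter [set c | u (arr a c)].
Proof.
case: arr_cond => arrT arrI _ [ut uup uI]; split.
- by rewrite /= arrT.
- by move=> x y ux xy; apply: uup ux _; apply: arr_homo_r.
- by move=> x y ux uy; rewrite /= -arrI; apply: uI.
Qed.

Lemma Dto_principal u a :
  is_filter u -> Dto arr u (principal a) = [set c | u (arr a c)].
Proof.
case=> _ uup _; apply/seteqP; split=> c.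
- by case=> a' aa' ua'c; apply: uup ua'c _; apply: arr_nhomo_l.
- by move=> uac; exists a => //; apply: lexx.
Qed.

Lemma stone_arr a b : stone (arr a b) = arrT arr (stone a) (stone b).
Proof.
apply/seteqP; split=> u [uu].
- move=> uab; split=> // Z Za v [_ vv [F [HF eZ DFv]]]; split=> //.
  apply: DFv; exists a => //; apply/(phiF_subset_stone _ HF).
  by rewrite -eZ.
- move=> succ_b; split=> //; apply: contrapT => nuab.
  have [v vv [Dv nvb]] := ultrafilter_separation _ (arr_filter a uu.1.1) nuab.
  suff [] : stone b v by [].
  apply: (succ_b (stone a)) => //; split=> //.
  exists (principal a); split; [exact: principal_filter|by rewrite phiF_principal|].
  by rewrite Dto_principal //; case: uu => -[].
Qed.

End Conditional.
End StoneRepresentation.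

Theorem theorem2p10 (d : Order.disp_t) (A : ctbDistrLatticeType d)
  (arr : A -> A -> A) (Harr : is_conditional arr) :
  [/\ injective (@stone d A),
      stone (Order.top : A) = @Ul d A /\ stone (Order.bottom : A) = set0,
      (forall a b : A, stone (Order.meet a b) = stone a `&` stone b /\
                       stone (Order.join a b) = stone a `|` stone b),
      (forall a : A, stone (Order.compl a) = @Ul d A `\` stone a)
    & forall a b : A, stone (arr a b) = arrT arr (stone a) (stone b)].
Proof.
split.
- exact: stone_inj.
- by split; [apply: stoneT|apply: stone0].
- by move=> a b; split; [apply: stoneI|apply: stoneU].
- exact: stoneC.
- exact: stone_arr.
Qed.
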